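(* Let $\mathcal{C}$ be a layered circuit of depth $n^{\delta}$ over an alphabet $\Sigma$ whose symbols are $b\log n$ bits, which has an $n^{\varphi}$-parallel partition. Then there is an algorithm in the (non-faulty) Clique model that computes the function $f_{\mathcal{C}}$ in $O(n^{\delta+\varphi})$ rounds.
   Context: Clique model: $n$ nodes communicate in synchronous rounds; in each round every ordered pair of nodes may exchange a message of $b\log n$ bits, for a fixed constant $b$. $\Sigma$ is an alphabet of size $2^{b\log n}$. Layered circuit of depth $D$ over $\Sigma$: a connected directed graph with gate set $V=V_0\cup\dots\cup V_D$ and wires only from $V_i$ to $V_{i+1}$; each gate $v$ of fan-in $F$ is labeled by $f_v:\Sigma^F\to\Sigma$; gates of $V_0$ are input gates; $f_{\mathcal{C}}$ maps the inputs to the values of the gates of $V_D$. $n^{\varphi}$-parallel partition: a partition of each layer $V_i$ into $n$ parts $P_{i,w}$, $w\in\{0,\dots,n-1\}$ (part $P_{i,w}$ assigned to node $w$), such that for all $i,w$ the number of wires from $P_{i,w}$ to gates of $V_{i+1}\setminus P_{i+1,w}$ and the number of wires into $P_{i+1,w}$ from gates of $V_i\setminus P_{i,w}$ are both $O(n^{1+\varphi})$. An algorithm computes $f_{\mathcal{C}}$ when the circuit inputs are distributed among the nodes according to the parts of $V_0$ and each node $w$ ends holding the values of the gates in its part of the last layer. $\delta,\varphi$ are fixed and $O(\cdot)$ refers to $n\to\infty$. *)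

From mathcomp Require Import all_boot.
From Stdlib Require Import Reals.

Set Implicit Arguments.
Unset Strict Implicit.
Unset Printing Implicit Defensive.

(* The alphabet Sigma: symbols of b * ceil(log2 n) bits, i.e. 2^(b log n) symbols.
   A Clique message (per ordered pair, per round) is one symbol of Sigma. *)
Definition Sigma (b n : nat) : Type := 'I_(2 ^ (b * up_log 2 n)).

Definition layered_circuit (G : finType) (D : nat) (layer : G -> nat) (wire : rel G) : Prop :=
  [/\ (forall v, layer v <= D),
      (forall i, i <= D -> exists v, layer v = i),
      (forall u v, wire u v -> layer v = (layer u).+1) &
      (forall u v, connect (fun a c => wire a c || wire c a) u v)].

Fixpoint gval_at (G : finType) (S : Type) (wire : rel G)
    (f : forall v : G, ({u : G | wire u v} -> S) -> S) (x : G -> S) (k : nat) (v : G) : S :=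
  match k with
  | 0 => x v
  | k'.+1 => f v (fun u => gval_at f x k' (val u))
  end.

(* Value of gate v on input x (only the values of x on input gates matter). *)
Definition gate_value (G : finType) (S : Type) (layer : G -> nat) (wire : rel G)
    (f : forall v : G, ({u : G | wire u v} -> S) -> S) (x : G -> S) (v : G) : S :=
  gval_at f x (layer v) v.

(* part v = w means v belongs to P_{layer v, w}. *)
Definition out_cross (G : finType) n (layer : G -> nat) (wire : rel G) (part : G -> 'I_n)
    (i : nat) (w : 'I_n) : nat :=
  #|[set p : G * G | [&& wire p.1 p.2, layer p.1 == i, part p.1 == w & part p.2 != w]]|.

Definition in_cross (G : finType) n (layer : G -> nat) (wire : rel G) (part : G -> 'I_n)
    (i : nat) (w : 'I_n) : nat :=
  #|[set p : G * G | [&& wire p.1 p.2, layer p.1 == i, part p.2 == w & part p.1 != w]]|.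

(* The cross-wire counts are bounded by C * n^(1+phi) (C is the O-constant). *)
Definition parallel_partition (C phi : R) (G : finType) n (layer : G -> nat) (wire : rel G)
    (part : G -> 'I_n) : Prop :=
  forall (i : nat) (w : 'I_n),
    (INR (out_cross layer wire part i w) <= C * Rpower (INR n) (1 + phi))%R /\
    (INR (in_cross layer wire part i w) <= C * Rpower (INR n) (1 + phi))%R.

(* Local state and computation are
   unrestricted (arbitrary state type S). *)
Fixpoint run n (S M : Type) (send : nat -> 'I_n -> 'I_n -> S -> M)
    (upd : nat -> 'I_n -> S -> ('I_n -> M) -> S) (r : nat) (s0 : 'I_n -> S) : 'I_n -> S :=
  match r with
  | 0 => s0
  | r'.+1 => let s := run send upd r' s0 in
             fun w => upd r' w (s w) (fun u => send r' u w (s u))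
  end.

Definition clique_computes_in (n : nat) (M : Type) (G : finType) (D : nat)
    (layer : G -> nat) (wire : rel G) (f : forall v : G, ({u : G | wire u v} -> M) -> M)
    (part : G -> 'I_n) (rounds : nat) : Prop :=
  exists (S : Type)
         (init : forall w : 'I_n, ({v : G | (layer v == 0) && (part v == w)} -> M) -> S)
         (send : nat -> 'I_n -> 'I_n -> S -> M)
         (upd : nat -> 'I_n -> S -> ('I_n -> M) -> S)
         (out : 'I_n -> S -> G -> M),
    forall x : G -> M, forall v : G, layer v = D ->
      out (part v) (run send upd rounds (fun w => init w (fun u => x (val u)))
                                (part v)) v
      = gate_value layer f x v.

From mathcomp Require Import all_boot zify.
From Stdlib Require Import Reals Lra ZArith FunctionalExtensionality ClassicalEpsilon.

(* Write K for an integer bound on C n^(1+phi) (cross wires leaving or entering one part in one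
   layer) and L := 2K/n + 1, so that 2K < L n.  Each cross wire u -> v of a layer is routed
   through a relay node x, as part u -> x -> part v.  Relays are chosen greedily, one wire at a
   time: since there are at most K - 1 other wires at each endpoint, by Markov's inequality
   fewer than n relays already carry L wires on the link from part u or on the link to part v,
   so some relay keeps every link at load at most L.  Each link then forwards its wires in L
   rounds, and a layer is simulated in 2L + 1 = O(n^phi) rounds, D layers in O(n^(delta+phi)). *)

Set Implicit Arguments.
Unset Strict Implicit.
Unset Printing Implicit Defensive.

Definition fiber (E J : finType) (A : {set E}) (g : E -> J) (x : J) : {set E} :=
  [set e in A | g e == x].

Lemma sum_card_fiber (E J : finType) (A : {set E}) (g : E -> J) :
  \sum_(x : J) #|fiber A g x| = #|A|.
Proof.
rewrite -sum1_card (partition_big g predT) //=.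
by apply: eq_bigr => x _; rewrite -sum1_card; apply: eq_bigl => e; rewrite inE.
Qed.

Lemma leq_card_heavy_fibers (E J : finType) (A : {set E}) (g : E -> J) L :
  #|[set x | L <= #|fiber A g x|]| * L <= #|A|.
Proof.
rewrite -(sum_card_fiber A g) (bigID [in [set x | L <= #|fiber A g x|]]) /=.
apply: leq_trans (leq_addr _ _); rewrite -sum1_card big_distrl /= mul1n.
by apply: leq_sum => x; rewrite inE.
Qed.

Lemma exists_light_fibers (E : finType) n (A B : {set E}) (g : E -> 'I_n) L :
  #|A| + #|B| < L * n -> exists x, #|fiber A g x| < L /\ #|fiber B g x| < L.
Proof.
move=> small_AB; set heavy := [set x | L <= #|fiber A g x|] :|: [set x | L <= #|fiber B g x|].
have : #|heavy| < n.
  apply: leq_ltn_trans (leq_card_setU _ _) _.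
  by have := leq_card_heavy_fibers A g L; have := leq_card_heavy_fibers B g L; nia.
move=> few_heavy; have /card_gt0P[x] : 0 < #|~: heavy|.
  by have := cardsC heavy; rewrite card_ord; lia.
by rewrite !inE negb_or -!ltnNge => /andP[]; exists x.
Qed.

Lemma card_fiber_fiber_setU1 (E J : finType) (A : {set E}) e0 (h g : E -> J) x a y :
  e0 \notin A ->
  #|fiber (fiber (e0 |: A) h a) [eta g with e0 |-> x] y|
    = ((h e0 == a) && (x == y)) + #|fiber (fiber A h a) g y|.
Proof.
move=> e0A; set F := fiber (fiber A h a) g y.
have e0F : e0 \notin F by rewrite !inE (negbTE e0A).
have -> : fiber (fiber (e0 |: A) h a) [eta g with e0 |-> x] y
          = if (h e0 == a) && (x == y) then e0 |: F else F.
  case: ifP => cond; apply/setP => e; rewrite !inE /=;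
    case: (eqVneq e e0) => [->|] //=; rewrite ?(negbTE e0A) ?andbF //.
by case: ifP; rewrite ?cardsU1 ?e0F.
Qed.

Section Relay.

Variables (E : finType) (n K L : nat) (src dst : E -> 'I_n) (P : {set E}).
Hypothesis src_load : forall a, #|fiber P src a| <= K.
Hypothesis dst_load : forall w, #|fiber P dst w| <= K.
Hypothesis capacity : 2 * K < L * n.

Definition balanced_relay (Q : {set E}) (relay : E -> 'I_n) : Prop :=
  forall a x, #|fiber (fiber Q src a) relay x| <= L /\ #|fiber (fiber Q dst a) relay x| <= L.

Lemma balanced_relay_setU1 (Q : {set E}) (e0 : E) (relay : E -> 'I_n) :
    e0 \notin Q -> e0 |: Q \subset P -> balanced_relay Q relay ->
  exists x, balanced_relay (e0 |: Q) [eta relay with e0 |-> x].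
Proof.
move=> e0Q /subsetP QP balanced.
have load_without_e0 (h : E -> 'I_n) : #|fiber P h (h e0)| <= K -> #|fiber Q h (h e0)| < K.
  apply: leq_trans; apply: proper_card; apply/properP; split.
    by apply/subsetP => e; rewrite !inE => /andP[eQ ->]; rewrite QP ?setU1r.
  by exists e0; rewrite !inE ?QP ?setU11 ?eqxx ?(negbTE e0Q).
have [x [light_src light_dst]] : exists x,
    #|fiber (fiber Q src (src e0)) relay x| < L /\ #|fiber (fiber Q dst (dst e0)) relay x| < L.
  apply: exists_light_fibers; apply: leq_ltn_trans capacity.
  by rewrite mul2n -addnn leq_add // ltnW // load_without_e0.
exists x => a y; rewrite !card_fiber_fiber_setU1 //.
split; [move: (balanced a y).1 | move: (balanced a y).2];
  by have [<-|_] := eqVneq (_ e0) a; have [<-|_] := eqVneq x y.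
Qed.

Lemma exists_balanced_relay : exists relay, balanced_relay P relay.
Proof.
have n_gt0 : 0 < n by move: capacity; rewrite lt0n; apply: contraTneq => ->; rewrite muln0.
suff /(_ (enum P)) : forall s, {subset s <= P} -> exists relay, balanced_relay [set:: s] relay.
  by rewrite set_enum; apply => e; rewrite mem_enum.
elim=> [|e0 s IH] sP.
  have fiber0 (g : E -> 'I_n) y : fiber set0 g y = set0 by apply/setP => e; rewrite !inE.
  by exists (fun=> Ordinal n_gt0) => a x; rewrite set_nil !fiber0 cards0.
have [relay balanced] := IH (fun e es => sP e (mem_behead (s := e0 :: s) es)).
rewrite set_cons; have [e0s|e0s] := boolP (e0 \in [set:: s]).
  by exists relay; rewrite (setUidPr _) // sub1set.
have e0sP : e0 |: [set:: s] \subset P.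
  by apply/subsetP => e; rewrite -set_cons inE; apply: sP.
have [x balanced'] := balanced_relay_setU1 e0s e0sP balanced.
by exists [eta relay with e0 |-> x].
Qed.

End Relay.

Section Simulation.

Variables (n : nat) (M : Type) (m0 : M) (G : finType) (layer : G -> nat) (wire : rel G).
Variables (f : forall v : G, ({u : G | wire u v} -> M) -> M) (part : G -> 'I_n).
Variable sched : nat -> 'I_n -> 'I_n -> option G.
Hypothesis wire_layer : forall u v, wire u v -> layer v = (layer u).+1.

Definition heard (knows : 'I_n -> G -> bool) t w g :=
  knows w g || [exists u, (sched t u w == Some g) && knows u g].

(* [known t w g]: node [w] holds the true value of gate [g] after [t] rounds.  It depends only
   on the public schedule, so nodes can use it to discard messages whose sender is not yet
   informed. *)

Fixpoint known t : 'I_n -> G -> bool :=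
  if t is t'.+1 then fun w g =>
    heard (known t') t' w g || (0 < layer g) && [forall u, wire u g ==> heard (known t') t' w u]
  else fun w g => (layer g == 0) && (part g == w).

Definition sim_init w (h : {v : G | (layer v == 0) && (part v == w)} -> M) : G -> M :=
  fun g => oapp h m0 (insub g).

Definition sim_send t u w (s : G -> M) : M := if sched t u w is Some g then s g else m0.

Definition sim_receive t w (s : G -> M) (msgs : 'I_n -> M) : G -> M := fun g =>
  if [pick u | (sched t u w == Some g) && known t u g] is Some u then msgs u else s g.

Definition sim_update t w (s : G -> M) (msgs : 'I_n -> M) : G -> M := fun g =>
  if (0 < layer g) && [forall u, wire u g ==> heard (known t) t w u]
  then f (fun u : {u | wire u g} => sim_receive t w s msgs (val u))
  else sim_receive t w s msgs g.

Lemma gate_value_succ x g : 0 < layer g ->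
  gate_value layer f x g = f (fun u : {u | wire u g} => gate_value layer f x (val u)).
Proof.
rewrite /gate_value; case lg: (layer g) => [|k] // _ /=.
congr (f _); apply: functional_extensionality => -[u wu] /=.
by have := wire_layer wu; rewrite lg => -[->].
Qed.

Lemma known_mono t t' w g : t <= t' -> known t w g -> known t' w g.
Proof.
move=> /subnK <-; elim: (t' - t) => //= d IH /IH known_g.
by rewrite /heard known_g.
Qed.

Lemma known_heard t w g : known t w g -> heard (known t) t w g.
Proof. by rewrite /heard => ->. Qed.

Lemma known_receive t u w g : sched t u w = Some g -> known t u g -> known t.+1 w g.
Proof.
by move=> sched_g known_g /=; apply/orP; left; apply/orP; right; apply/existsP; exists u;
  rewrite sched_g eqxx known_g.
Qed.

Lemma run_sim_known x t w g : known t w g ->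
  run sim_send sim_update t (fun w => @sim_init w (fun u => x (val u))) w g
  = gate_value layer f x g.
Proof.
elim: t w g => [|t IH] w g /=.
  case/andP => /eqP g0 /eqP gw; rewrite /sim_init insubT /=; first by rewrite g0 gw !eqxx.
  by move=> _; rewrite /gate_value g0.
set s := run _ _ t _.
have receive_ok g' : heard (known t) t w g' ->
    sim_receive t w (s w) (fun u => sim_send t u w (s u)) g' = gate_value layer f x g'.
  rewrite /sim_receive; case: pickP => [u /andP[/eqP sched_g known_g] _|none].
    by rewrite /sim_send sched_g; apply: IH.
  by case/orP => [/IH //|/existsP[u]]; rewrite none.
rewrite /sim_update; case: ifP => [/andP[g_pos /forallP preds] _|_ /orP[] // heard_g].
  rewrite gate_value_succ //; congr (f _); apply: functional_extensionality => -[u wu] /=.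
  by apply: receive_ok; have := preds u; rewrite wu.
exact: receive_ok.
Qed.

Definition two_hop_schedule (B L : nat) := forall u v, wire u v -> part u != part v ->
  exists x j1 j2, [/\ j1 < L, j2 < L, sched (layer u * B + j1) (part u) x = Some u &
                      sched (layer u * B + L + j2) x (part v) = Some u].

Lemma known_at_block (B L : nat) : L.*2 < B -> two_hop_schedule B L ->
  forall v, known (layer v * B) (part v) v.
Proof.
move=> L2B two_hop; suff known_layer i v : layer v = i -> known (i * B) (part v) v.
  by move=> v; apply: known_layer.
elim: i v => [|i IH] v lv; first by rewrite mul0n /= lv !eqxx.
apply: (@known_mono (i * B + L.*2).+1); first by rewrite mulSn; lia.
rewrite /= lv /=; apply/orP; right; apply/forallP => u; apply/implyP => wu.
have lu : layer u = i by have := wire_layer wu; rewrite lv => -[].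
apply: known_heard; have [<-|cross] := eqVneq (part u) (part v).
  by apply: (@known_mono (i * B)); [lia | exact: IH].
have [x [j1 [j2 [j1L j2L hop1 hop2]]]] := two_hop _ _ wu cross; rewrite lu in hop1 hop2.
apply: (@known_mono (i * B + L + j2).+1); first lia.
apply: (known_receive hop2); apply: (@known_mono (i * B + j1).+1); first lia.
by apply: (known_receive hop1); apply: (@known_mono (i * B)); [lia | exact: IH].
Qed.

Lemma clique_computes_of_two_hop_schedule (D B L : nat) :
  L.*2 < B -> two_hop_schedule B L -> clique_computes_in D layer f part (D * B).
Proof.
move=> L2B two_hop; exists (G -> M), sim_init, sim_send, sim_update, (fun _ s g => s g).
move=> x v <-; exact: run_sim_known (known_at_block L2B two_hop v).
Qed.

End Simulation.

Lemma onth_enum_slot (T : finType) (A : {set T}) p :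
  p \in A -> exists2 j, j < #|A| & onth (enum A) j = Some p.
Proof.
rewrite -mem_enum => /onthP[j pj]; exists j => //.
by rewrite cardE -onthTE pj.
Qed.

Section RelaySchedule.

Variables (n : nat) (G : finType) (layer : G -> nat) (wire : rel G) (part : G -> 'I_n).

Definition cross_wires i : {set G * G} :=
  [set p | [&& wire p.1 p.2, layer p.1 == i & part p.1 != part p.2]].

Definition src_part (p : G * G) := part p.1.
Definition dst_part (p : G * G) := part p.2.

Lemma out_cross_fiber i w : out_cross layer wire part i w = #|fiber (cross_wires i) src_part w|.
Proof.
apply: eq_card => p; rewrite !inE /src_part.
by case: (part p.1 =P w) => [->|]; rewrite ?andbT ?andbF // [w == _]eq_sym.
Qed.

Lemma in_cross_fiber i w : in_cross layer wire part i w = #|fiber (cross_wires i) dst_part w|.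
Proof.
apply: eq_card => p; rewrite !inE /dst_part.
by case: (part p.2 =P w) => [->|]; rewrite ?andbT ?andbF.
Qed.

Variables (relay : nat -> G * G -> 'I_n) (L : nat).
Hypothesis relay_balanced :
  forall i, balanced_relay L src_part dst_part (cross_wires i) (relay i).

Definition first_hop i a x := fiber (fiber (cross_wires i) src_part a) (relay i) x.
Definition second_hop i x w := fiber (fiber (cross_wires i) dst_part w) (relay i) x.

(* Layer [i] owns the block of rounds [i * (2L + 1), (i + 1) * (2L + 1)): [L] rounds for
   each hop, then one round in which the next layer is evaluated. *)
Definition relay_schedule t a b : option G :=
  let i := t %/ L.*2.+1 in let j := t %% L.*2.+1 in
  omap fst (if j < L then onth (enum (first_hop i a b)) j
            else onth (enum (second_hop i a b)) (j - L)).

Lemma relay_schedule_slot i j a b : j < L.*2.+1 ->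
  relay_schedule (i * L.*2.+1 + j) a b
  = omap fst (if j < L then onth (enum (first_hop i a b)) j
              else onth (enum (second_hop i a b)) (j - L)).
Proof. by move=> jB; rewrite /relay_schedule divnMDl // divn_small // addn0 modnMDl modn_small. Qed.

Lemma relay_schedule_two_hop : two_hop_schedule layer wire part relay_schedule L.*2.+1 L.
Proof.
move=> u v wu cross; set i := layer u; set x := relay i (u, v).
have [j1 j1_lt hop1] : exists2 j, j < #|first_hop i (part u) x|
    & onth (enum (first_hop i (part u) x)) j = Some (u, v).
  by apply: onth_enum_slot; rewrite !inE /= wu cross !eqxx.
have [j2 j2_lt hop2] : exists2 j, j < #|second_hop i x (part v)|
    & onth (enum (second_hop i x (part v))) j = Some (u, v).
  by apply: onth_enum_slot; rewrite !inE /= wu cross !eqxx.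
have {j1_lt} j1L := leq_trans j1_lt (relay_balanced i (part u) x).1.
have {j2_lt} j2L := leq_trans j2_lt (relay_balanced i (part v) x).2.
exists x, j1, j2; split => //.
  by rewrite relay_schedule_slot ?j1L ?hop1 //; lia.
by rewrite -addnA relay_schedule_slot ?ltnNge ?leq_addr /= ?addKn ?hop2 //; lia.
Qed.

End RelaySchedule.

Lemma leq_to_nat_up (X : R) m : (INR m <= X)%R -> m <= Z.to_nat (up X).
Proof.
move=> mX; have [upX _] := archimed X.
have /lt_IZR : (IZR (Z.of_nat m) < IZR (up X))%R by rewrite -INR_IZR_INZ; lra.
by move=> ?; apply/leP; lia.
Qed.

Lemma to_nat_up_le (X : R) : (INR (Z.to_nat (up X)) <= Rabs X + 1)%R.
Proof.
have [upX upX1] := archimed X; have := Rle_abs X; have := Rabs_pos X.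
case: (Z.le_gt_cases (up X) 0) => up0.
  by rewrite (_ : Z.to_nat (up X) = 0%N) /=; [lra | lia].
by rewrite INR_IZR_INZ Z2Nat.id; [lra | lia].
Qed.

Lemma block_length_le (n K : nat) (c p : R) : 0 < n -> (1 <= p)%R -> (0 <= c)%R ->
  (INR K <= c * INR n * p + 1)%R ->
  (INR ((2 * K) %/ n + 1).*2.+1 <= (4 * c + 7) * p)%R.
Proof.
move=> n_gt0 p1 c0 K_le; set q := (2 * K) %/ n.
have qn : q * n <= 2 * K by exact: leq_divM.
have : (q + 1).*2.+1 * n <= 4 * K + 3 * n by rewrite -mul2n; nia.
move/leP/le_INR; rewrite (mult_INR _.+1 n); set B := INR _.+1.
rewrite (plus_INR (4 * K)) (mult_INR 4 K) (mult_INR 3 n) /= => Bn.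
have n1 : (1 <= INR n)%R by apply: (le_INR 1); apply/leP.
have cnp : (0 <= c * INR n * p)%R by apply: Rmult_le_pos; [apply: Rmult_le_pos|]; lra.
apply: (Rmult_le_reg_r (INR n)); [lra | nra].
Qed.

Lemma rounds_le (n D : nat) (C delta phi : R) :
  0 < n -> (0 <= phi)%R -> (INR D <= Rpower (INR n) delta)%R ->
  (INR (D * ((2 * Z.to_nat (up (C * Rpower (INR n) (1 + phi)))) %/ n + 1).*2.+1)
     <= (4 * Rabs C + 7) * Rpower (INR n) (delta + phi))%R.
Proof.
move=> n_gt0 phi0 D_le.
have n1 : (1 <= INR n)%R by apply: (le_INR 1); apply/leP.
have p1 : (1 <= Rpower (INR n) phi)%R.
  by rewrite -(Rpower_O (INR n)); [apply: Rle_Rpower | lra].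
have K_le : (INR (Z.to_nat (up (C * Rpower (INR n) (1 + phi))))
               <= Rabs C * INR n * Rpower (INR n) phi + 1)%R.
  apply: Rle_trans (to_nat_up_le _) _; right.
  rewrite Rabs_mult Rpower_plus Rpower_1 ?Rmult_assoc; last lra.
  by rewrite (Rabs_pos_eq (INR n * _)) //; apply: Rmult_le_pos; [lra | exact: Rlt_le (exp_pos _)].
apply: (Rle_trans _ (Rpower (INR n) delta * ((4 * Rabs C + 7) * Rpower (INR n) phi))).
  rewrite (mult_INR D); apply: Rmult_le_compat; [exact: pos_INR | exact: pos_INR | exact: D_le |].
  by apply: block_length_le => //; exact: Rabs_pos.
by right; rewrite Rpower_plus; ring.
Qed.

Theorem lemma3 (b : nat) (delta phi C : R) :
  0 < b -> (0 <= phi)%R ->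
  exists (C' : R) (N : nat), forall n : nat, N <= n ->
  forall (G : finType) (D : nat) (layer : G -> nat) (wire : rel G)
         (f : forall v : G, ({u : G | wire u v} -> Sigma b n) -> Sigma b n)
         (part : G -> 'I_n),
    layered_circuit D layer wire ->
    (INR D <= Rpower (INR n) delta)%R ->
    parallel_partition C phi layer wire part ->
    exists rounds : nat,
      (INR rounds <= C' * Rpower (INR n) (delta + phi))%R /\
      @clique_computes_in n (Sigma b n) G D layer wire f part rounds.
Proof.
(* The alphabet is nonempty for every [b]. *)
move=> _ phi_ge0; exists (4 * Rabs C + 7)%R, 1 => n n_gt0 G D layer wire f part circuit D_le partition.
set K := Z.to_nat (up (C * Rpower (INR n) (1 + phi))).
set L := (2 * K) %/ n + 1.
have wire_layer : forall u v, wire u v -> layer v = (layer u).+1 by case: circuit.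
have balanced_layer i : exists relay : G * G -> 'I_n,
    balanced_relay L (src_part part) (dst_part part) (cross_wires layer wire part i) relay.
  apply: (exists_balanced_relay (K := K)).
  - by move=> a; rewrite -out_cross_fiber; apply: leq_to_nat_up; exact: (partition i a).1.
  - by move=> a; rewrite -in_cross_fiber; apply: leq_to_nat_up; exact: (partition i a).2.
  - by rewrite /L addn1 ltn_ceil.
have [relay balanced] := choice _ balanced_layer.
have m0 : Sigma b n by exists 0; have := Nat.pow_nonzero 2 (b * up_log 2 n); lia.
exists (D * L.*2.+1); split; first exact: rounds_le.
apply: (clique_computes_of_two_hop_schedule m0 f wire_layer D (ltnSn L.*2)).
exact: relay_schedule_two_hop balanced.
Qed.
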